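(* If $Z$ is an integer-valued random variable with finite variance $\sigma_Z^2$, then $$\sup_{n\in\mathbb Z}P(Z=n)\ge\frac{1}{6\sigma_Z+4}.$$ *)

From HB Require Import structures.
From mathcomp Require Import all_boot all_order all_algebra.
From mathcomp Require Import all_classical all_reals all_analysis.

From HB Require Import structures.
From mathcomp Require Import all_boot all_order all_algebra.
From mathcomp Require Import all_classical all_reals all_analysis.
From mathcomp Require Import lra zify.
Import Order.TTheory GRing.Theory Num.Theory.
Local Open Scope classical_set_scope.
Local Open Scope ring_scope.

(* Chebyshev's inequality with radius a = 2 sigma + 1/2 puts probability at
   least 3/4 on the open interval of radius a around the mean.  That interval
   contains at most 2a + 1 = 4 sigma + 2 integers, so one of them carries
   probability at least 3 / (16 sigma + 8) >= 1 / (6 sigma + 4). *)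

Lemma set_seq_cons (T : eqType) (x : T) (s : seq T) :
  [set` x :: s] = [set x] `|` [set` s].
Proof.
apply/seteqP; split => y /=; rewrite inE.
- by move=> /orP[/eqP|]; [left|right].
- by move=> [->|->]; rewrite ?eqxx ?orbT.
Qed.

Lemma int_itv_cover {R : archiFieldType} (c a : R) : 0 <= a ->
  exists2 s : seq R, (size s)%:R <= 2 * a + 1 &
    forall n : int, c - a < n%:~R < c + a -> n%:~R \in s.
Proof.
move=> a0; set k := Num.floor (c - a) + 1; set f := Num.floor (2 * a).
have f0 : 0 <= f by rewrite floor_ge0; lra.
exists [seq (k + i%:Z)%:~R | i <- iota 0 `|f|.+1].
  rewrite size_map size_iota -addn1 natrD natr_absz ger0_norm //.
  by rewrite lerD2r floor_le.
move=> n /andP[lo hi]; apply/mapP.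
have kn : k <= n by rewrite /k lezD1 floor_lt_int.
have nkf : n - k <= f.
  rewrite floor_ge_int intrB /k intrD.
  have := floorD1_gt (c - a); rewrite intrD; lra.
exists `|n - k|%N; last by rewrite abszE ger0_norm ?subr_ge0 // subrKC.
by rewrite mem_iota /=; lia.
Qed.

Lemma measurable_set_seq (R : realType) (s : seq R) : measurable [set` s].
Proof.
elim: s => [|x s IH]; first by rewrite set_nil.
by rewrite set_seq_cons; apply: measurableU => //; exact: measurable_set1.
Qed.

Section integer_valued_measurable_function.
Context {d} {T : measurableType d} {R : realType}.
Variables (mu : {measure set T -> \bar R}) (f : {mfun T >-> R}).
Hypothesis f_int : forall t, exists n : int, f t = n%:~R.

Definition int_atom_sup := ereal_sup [set mu (f @^-1` [set n%:~R]) | n in [set: int]].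

Lemma atom_le_int_atom_sup x : (mu (f @^-1` [set x]) <= int_atom_sup)%E.
Proof.
have int_atom_le n : (mu (f @^-1` [set n%:~R]) <= int_atom_sup)%E.
  by apply: ereal_sup_ubound; exists n.
have [[n ->]|x_nonint] := pselect (exists n : int, x = n%:~R); first exact: int_atom_le.
suff -> : f @^-1` [set x] = set0 by rewrite measure0 (le_trans _ (int_atom_le 0)).
apply/seteqP; split => t //= ftx; apply: x_nonint.
by have [n fn] := f_int t; exists n; rewrite -ftx.
Qed.

Lemma measure_preimage_set_seq_le (r : R) (s : seq R) :
  (forall x, (mu (f @^-1` [set x]) <= r%:E)%E) ->
  (mu (f @^-1` [set` s]) <= ((size s)%:R * r)%:E)%E.
Proof.
move=> atom_le; elim: s => [|x s IH].
  by rewrite set_nil preimage_set0 measure0 mul0r.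
rewrite set_seq_cons preimage_setU.
apply: le_trans (measureU2 _ _ _) _.
- by apply: measurable_funPTI; exact: measurable_set1.
- by apply: measurable_funPTI; exact: measurable_set_seq.
by rewrite /= -addn1 natrD mulrDl mul1r EFinD addeC leeD.
Qed.

Lemma measure_preimage_itv_le (r c a : R) : 0 <= a -> 0 <= r ->
  (forall x, (mu (f @^-1` [set x]) <= r%:E)%E) ->
  (mu (f @^-1` `](c - a)%R, (c + a)%R[) <= ((2 * a + 1) * r)%:E)%E.
Proof.
move=> a0 r0 atom_le; have [s size_s cover] := int_itv_cover c _ a0.
apply: (@le_trans _ _ (mu (f @^-1` [set` s]))).
  apply: le_measure; rewrite ?inE.
  - by apply: measurable_funPTI; exact: measurable_itv.
  - by apply: measurable_funPTI; exact: measurable_set_seq.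
  by move=> t /=; rewrite in_itv /=; have [n ->] := f_int t; exact: cover.
apply: le_trans (measure_preimage_set_seq_le r s atom_le) _.
by rewrite lee_fin ler_wpM2r.
Qed.

End integer_valued_measurable_function.

Section probability.
Context {d} {T : measurableType d} {R : realType} {P : probability T R}.

Lemma int_atom_sup_fin_num (X : {RV P >-> R}) : int_atom_sup P X \is a fin_num.
Proof.
rewrite ge0_fin_numE.
  apply: le_lt_trans (ltey 1); apply: ge_ereal_sup => _ [n _ <-].
  by apply: probability_le1; apply: measurable_funPTI; exact: measurable_set1.
apply: (le_trans (measure_ge0 P (X @^-1` [set 0%:~R]))).
by apply: ereal_sup_ubound; exists 0.
Qed.

Lemma probability_near_mean_ge (X : {RV P >-> R}) (a : R) :
  0 < a -> (X : T -> R) \in Lfun P 2%:E ->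
  ((1 - a ^- 2 * fine 'V_P[X])%:E <=
    P (X @^-1` `](fine 'E_P[X] - a)%R, (fine 'E_P[X] + a)%R[))%E.
Proof.
move=> a0 X2; set mu := fine 'E_P[X]; set C := X @^-1` _.
have mC : measurable C by apply: measurable_funPTI; exact: measurable_itv.
have CC : ~` C = [set x | a <= `|X x - mu|].
  apply/seteqP; split => x /=; rewrite /C /= in_itv /=.
    by move/negP; rewrite -ltr_distlC leNgt distrC.
  by rewrite leNgt distrC ltr_distlC => /negP.
have PCfin : P C \is a fin_num.
  by rewrite ge0_fin_numE // (le_lt_trans (probability_le1 P mC)) ?ltey.
have := chebyshev X a0.
rewrite -CC probability_setC // -(fineK PCfin) -(fineK (variance_fin_num X2)).
by rewrite -EFinB -EFinM !lee_fin lerBlDr addrC -lerBlDr.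
Qed.

End probability.

Theorem lemma5p6 (d : measure_display) (T : measurableType d) (R : realType)
    (P : probability T R) (Z : {RV P >-> R})
    (Zint : forall t, exists n : int, Z t = n%:~R)
    (Z2 : (Z : T -> R) \in Lfun P 2%:E) :
  (((6 * Num.sqrt (fine ('V_P[Z])) + 4)^-1)%:E <=
    ereal_sup [set P (Z @^-1` [set (n%:~R : R)]) | n in [set: int]])%E.
Proof.
have := atom_le_int_atom_sup P Z Zint.
rewrite -[ereal_sup _]/(int_atom_sup P Z) -(fineK (int_atom_sup_fin_num Z)).
set r := fine _ => atom_le.
have r0 : 0 <= r by rewrite -lee_fin (le_trans _ (atom_le 0)).
set v := fine 'V_P[Z]; set s := Num.sqrt v; set a := 2 * s + 2^-1.
have s0 : 0 <= s := sqrtr_ge0 v.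
have v0 : 0 <= v by apply: fine_ge0; exact: variance_ge0.
have a0 : 0 < a by rewrite /a; lra.
have chebyshev_bound : a ^- 2 * v <= 4^-1.
  rewrite -(sqr_sqrtr v0) -/s mulrC ler_pdivrMr ?exprn_gt0 // /a; nra.
have := le_trans (probability_near_mean_ge _ _ a0 Z2)
  (measure_preimage_itv_le P Z Zint _ _ _ (ltW a0) r0 atom_le).
rewrite -/v lee_fin => near_mean_le.
rewrite lee_fin -[_^-1]mulr1 ler_pdivrMl; last by lra.
have sr0 : 0 <= s * r := mulr_ge0 s0 r0.
rewrite /a in near_mean_le; lra.
Qed.
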